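(* Let $k\ge 2$, $w=2^k-1$, $v=2^{k-1}$. For $j\ge1$ let $\tilde U_j^R$ be the sequence of jump lengths consisting of one jump of length $2^j+2^{j-1}-1$ followed by $2^j-1$ jumps of length $1$. Consider a line of $w$ cells indexed $0,\dots,w-1$, all empty except one cell with even index $p\in\{0,2,\dots,w-1\}$ (arbitrary), on which the frog stands. Then for the fixed sequence $\tilde U_1^R,\tilde U_2^R,\dots,\tilde U_{k-1}^R$ there is a valid execution that visits every cell of the line exactly once and ends with the frog on the center cell $v-1$.
   Context: A frog on a line of cells performs a given sequence of positive jump lengths; for each jump it chooses a direction, moving from position $q$ to $q+J$ or $q-J$. An execution is valid if every landing cell lies on the line, is not blocked, and has not been visited before (the starting cell counts as visited). Cells are indexed from $0$. *)

From mathcomp Require Import all_boot all_order all_algebra.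
Set Implicit Arguments. Unset Strict Implicit. Unset Printing Implicit Defensive.
Import Order.TTheory GRing.Theory Num.Theory.
Local Open Scope ring_scope.

Definition UjumpR (j : nat) : seq nat :=
  ((2 ^ j + 2 ^ j.-1 - 1)%N) :: nseq (2 ^ j - 1)%N 1%N.

Definition jumps (k : nat) : seq nat :=
  flatten [seq UjumpR j | j <- iota 1 k.-1].

Definition step (q : int) (jd : nat * bool) : int :=
  if jd.2 then q + (jd.1)%:Z else q - (jd.1)%:Z.

Definition landings (q0 : int) (js : seq nat) (ds : seq bool) : seq int :=
  scanl step q0 (zip js ds).

Definition final_pos (q0 : int) (js : seq nat) (ds : seq bool) : int :=
  last q0 (landings q0 js ds).

Definition valid_exec (n : nat) (blocked : pred int) (q0 : int)
    (js : seq nat) (ds : seq bool) : Prop :=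
  size ds = size js /\
  (forall q, q \in landings q0 js ds -> 0 <= q < n%:Z /\ ~~ blocked q) /\
  uniq (q0 :: landings q0 js ds).

Definition visits_all (n : nat) (q0 : int) (js : seq nat) (ds : seq bool) : Prop :=
  forall c : nat, (c < n)%N -> c%:Z \in q0 :: landings q0 js ds.

From mathcomp Require Import all_boot all_order all_algebra zify.
Import Order.TTheory GRing.Theory Num.Theory.
Local Open Scope ring_scope.

Set Implicit Arguments.
Unset Strict Implicit.

(* After the jumps U_1, ..., U_n the visited cells form a block of 2^(n+1) - 1
   consecutive cells with the frog on its centre, and this centre can be any
   cell t with |t - start| <= 2^n - 1 and t - start of the parity of 2^n - 1.
   Indeed, with N = 2^n, the long jump of U_(n+1) (length 3N - 1) from the
   centre t' of such a block of radius N - 1 lands 2N cells beyond one end of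
   it, and the 2N - 1 unit jumps back fill the gap exactly; the frog stops at
   t' +- N, the centre of the new block of radius 2N - 1. The side of each
   long jump is read off the binary digits of the target. For an even start p
   on the line of 2^k - 1 cells the target v - 1 is admissible, and the final
   block is then the whole line. *)

Definition itv_enum (s : seq int) (lo hi : int) : Prop :=
  uniq s /\ forall q, (q \in s) = (lo <= q < hi).

Lemma itv_enum1 x : itv_enum [:: x] x (x + 1).
Proof. by split => // q; rewrite inE; apply/eqP/idP; lia. Qed.

Lemma itv_enum_cat s1 s2 a b c : a <= b <= c ->
  itv_enum s1 a b -> itv_enum s2 b c -> itv_enum (s1 ++ s2) a c.
Proof.
move=> abc [u1 m1] [u2 m2]; split => [|q]; last by rewrite mem_cat m1 m2; lia.
rewrite cat_uniq u1 u2 andbT /=; apply/hasPn => q; rewrite m1 m2; lia.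
Qed.

Lemma itv_enum_catC s1 s2 a c :
  itv_enum (s1 ++ s2) a c -> itv_enum (s2 ++ s1) a c.
Proof.
case=> u m; split=> [|q]; first by rewrite uniq_catC.
by rewrite mem_cat orbC -mem_cat.
Qed.

Lemma last_scanl (T1 T2 : Type) (g : T1 -> T2 -> T1) x s :
  last x (scanl g x s) = foldl g x s.
Proof. by elim: s x => //= y s IH x. Qed.

Lemma landings_cat q0 js1 js2 ds1 ds2 : size ds1 = size js1 ->
  landings q0 (js1 ++ js2) (ds1 ++ ds2) =
  landings q0 js1 ds1 ++ landings (final_pos q0 js1 ds1) js2 ds2.
Proof.
by move=> eq_sz; rewrite /final_pos /landings zip_cat // scanl_cat last_scanl.
Qed.

Lemma final_pos_cat q0 js1 js2 ds1 ds2 : size ds1 = size js1 ->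
  final_pos q0 (js1 ++ js2) (ds1 ++ ds2) =
  final_pos (final_pos q0 js1 ds1) js2 ds2.
Proof. by move=> eq_sz; rewrite /final_pos landings_cat // last_cat. Qed.

Lemma landings_cons q0 j js d ds :
  landings q0 (j :: js) (d :: ds) =
  step q0 (j, d) :: landings (step q0 (j, d)) js ds.
Proof. by []. Qed.

Lemma final_pos_cons q0 j js d ds :
  final_pos q0 (j :: js) (d :: ds) = final_pos (step q0 (j, d)) js ds.
Proof. by []. Qed.

Lemma unit_walk_right m y :
  itv_enum (landings y (nseq m 1%N) (nseq m true)) (y + 1) (y + m%:Z + 1) /\
  final_pos y (nseq m 1%N) (nseq m true) = y + m%:Z.
Proof.
elim: m y => [|m IH] y.
  by split; [split=> // q; rewrite in_nil; lia | rewrite addr0].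
have [walk fin] := IH (y + 1).
split; last by rewrite final_pos_cons fin; lia.
have -> : y + m.+1%:Z + 1 = y + 1 + m%:Z + 1 by lia.
by apply: (itv_enum_cat _ (itv_enum1 _) walk); lia.
Qed.

Lemma unit_walk_left m y :
  itv_enum (landings y (nseq m 1%N) (nseq m false)) (y - m%:Z) y /\
  final_pos y (nseq m 1%N) (nseq m false) = y - m%:Z.
Proof.
elim: m y => [|m IH] y.
  by split; [split=> // q; rewrite in_nil; lia | rewrite subr0].
have [walk fin] := IH (y - 1).
split; last by rewrite final_pos_cons fin; lia.
have -> : y - m.+1%:Z = y - 1 - m%:Z by lia.
have one := itv_enum1 (y - 1); rewrite subrK in one.
have -> : landings y (nseq m.+1 1%N) (nseq m.+1 false) =
  [:: y - 1] ++ landings (y - 1) (nseq m 1%N) (nseq m false) by [].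
by apply/itv_enum_catC/(itv_enum_cat _ walk one); lia.
Qed.

Definition stage_dirs (j : nat) (b : bool) : seq bool :=
  b :: nseq (2 ^ j - 1) (~~ b).

Lemma size_stage_dirs j b : size (stage_dirs j b) = size (UjumpR j).
Proof. by rewrite /= !size_nseq. Qed.

Lemma stage_right n t :
  itv_enum (landings t (UjumpR n.+1) (stage_dirs n.+1 true))
    (t + (2 ^ n)%N%:Z) (t + 3 * (2 ^ n)%N%:Z) /\
  final_pos t (UjumpR n.+1) (stage_dirs n.+1 true) = t + (2 ^ n)%N%:Z.
Proof.
set y := t + 3 * (2 ^ n)%N%:Z - 1; set m := (2 ^ n.+1 - 1)%N.
have N_gt0 : (0 < 2 ^ n)%N by rewrite expn_gt0.
have jump : step t ((2 ^ n.+1 + 2 ^ n.+1.-1 - 1)%N, true) = y.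
  by rewrite /step /y expnS /=; lia.
rewrite /UjumpR /stage_dirs landings_cons final_pos_cons jump -/m.
have [walk ->] := unit_walk_left m y.
split; last by rewrite /y /m expnS; lia.
have -> : t + (2 ^ n)%N%:Z = y - m%:Z by rewrite /y /m expnS; lia.
have -> : t + 3 * (2 ^ n)%N%:Z = y + 1 by rewrite /y; lia.
apply: (@itv_enum_catC (landings _ _ _) [:: y]).
by apply: (itv_enum_cat _ walk (itv_enum1 y)); lia.
Qed.

Lemma stage_left n t :
  itv_enum (landings t (UjumpR n.+1) (stage_dirs n.+1 false))
    (t - 3 * (2 ^ n)%N%:Z + 1) (t - (2 ^ n)%N%:Z + 1) /\
  final_pos t (UjumpR n.+1) (stage_dirs n.+1 false) = t - (2 ^ n)%N%:Z.
Proof.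
set y := t - 3 * (2 ^ n)%N%:Z + 1; set m := (2 ^ n.+1 - 1)%N.
have N_gt0 : (0 < 2 ^ n)%N by rewrite expn_gt0.
have jump : step t ((2 ^ n.+1 + 2 ^ n.+1.-1 - 1)%N, false) = y.
  by rewrite /step /y expnS /=; lia.
rewrite /UjumpR /stage_dirs landings_cons final_pos_cons jump -/m.
have [walk ->] := unit_walk_right m y.
split; last by rewrite /y /m expnS; lia.
have -> : t - (2 ^ n)%N%:Z + 1 = y + m%:Z + 1 by rewrite /y /m expnS; lia.
by apply: (itv_enum_cat _ (itv_enum1 y) walk); lia.
Qed.

Lemma jumpsS n : jumps n.+2 = jumps n.+1 ++ UjumpR n.+1.
Proof.
by rewrite /jumps -[n.+2.-1]addn1 iotaD map_cat flatten_cat /= cats0 add1n.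
Qed.

Lemma centred_block_exec n c t (a : nat) :
  (a < 2 ^ n)%N -> t = c + 2 * a%:Z + 1 - (2 ^ n)%N%:Z ->
  exists ds, size ds = size (jumps n.+1) /\
    itv_enum (c :: landings c (jumps n.+1) ds)
      (t - (2 ^ n)%N%:Z + 1) (t + (2 ^ n)%N%:Z) /\
    final_pos c (jumps n.+1) ds = t.
Proof.
elim: n a t => [|n IH] a t a_lt t_def.
  have -> : t = c by rewrite expn0 in a_lt t_def; lia.
  by exists [::]; split; last split; rewrite // expn0 subrK; apply: itv_enum1.
set N := (2 ^ n)%N%:Z.
have N_gt0 : (0 < 2 ^ n)%N by rewrite expn_gt0.
pose b := (2 ^ n <= a)%N.
have [||ds [size_ds [block fin]]] :=
  IH (if b then a - 2 ^ n else a)%N (if b then t - N else t + N).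
- by rewrite /b; case: (leqP (2 ^ n) a); rewrite expnS in a_lt; lia.
- by rewrite /b /N; case: (leqP (2 ^ n) a); rewrite expnS in t_def; lia.
exists (ds ++ stage_dirs n.+1 b).
rewrite jumpsS landings_cat // final_pos_cat // fin -cat_cons.
rewrite !size_cat size_ds size_stage_dirs; split=> //.
have -> : (2 ^ n.+1)%N%:Z = N + N by rewrite expnS /N; lia.
move: block; rewrite /b; case: (leqP (2 ^ n) a) => _ block.
- have [stage ->] := stage_right n (t - N); split; last lia.
  rewrite -/N in stage.
  have -> : t - (N + N) + 1 = t - N - N + 1 by lia.
  have -> : t + (N + N) = t - N + 3 * N by lia.
  by apply: (itv_enum_cat _ block stage); lia.
- have [stage ->] := stage_left n (t + N); split; last lia.
  rewrite -/N in stage.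
  have -> : t - (N + N) + 1 = t + N - 3 * N + 1 by lia.
  have -> : t + (N + N) = t + N + N by lia.
  by apply/itv_enum_catC/(itv_enum_cat _ stage block); lia.
Qed.

Theorem mainTheorem8 (k p : nat) :
  (2 <= k)%N -> ~~ odd p -> (p < 2 ^ k - 1)%N ->
  exists ds : seq bool,
    valid_exec (2 ^ k - 1) pred0 p%:Z (jumps k) ds /\
    visits_all (2 ^ k - 1) p%:Z (jumps k) ds /\
    final_pos p%:Z (jumps k) ds = (2 ^ k.-1 - 1)%N%:Z.
Proof.
case: k => // n _ p_even p_lt /=.
have N_gt0 : (0 < 2 ^ n)%N by rewrite expn_gt0.
have p_half := odd_double_half p; rewrite (negbTE p_even) add0n in p_half.
rewrite expnS in p_lt *.
have [||ds [size_ds [[uniq_ds mem_ds] final]]] :=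
  centred_block_exec (n := n) (c := p%:Z) (t := (2 ^ n - 1)%N%:Z)
    (a := (2 ^ n - 1 - p./2)%N).
- lia.
- rewrite -p_half; lia.
have on_line q : (q \in p%:Z :: landings p%:Z (jumps n.+1) ds) =
    (0 <= q < (2 * 2 ^ n - 1)%N%:Z).
  by rewrite mem_ds; apply/idP/idP; lia.
exists ds; split; [split; [done | split] | split] => //.
- by move=> q q_in; rewrite -on_line inE q_in orbT.
- by move=> c c_lt; rewrite on_line; lia.
Qed.
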